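(* There exists a locally convex topology $\tau$ on the closed unit ball $B_{c_0}$ of $c_0$, containing the weak topology of $B_{c_0}$, such that $B_{c_0}$ is $\tau$-strongly regular for open subsets, while every nonempty $\tau$-open subset of $B_{c_0}$ has (norm) diameter $2$.
   Context: $c_0$ carries its usual sup norm. Locally convex means having a basis of convex open sets. For $O\subset B_{c_0}$, $\tau|_O$ denotes the induced topology. $B_{c_0}$ is $\tau$-strongly regular for open subsets if for every nonempty convex $\tau$-open subset $O$ of $B_{c_0}$ and every $\varepsilon>0$ there is a convex combination (Minkowski sum $\sum_i\lambda_iU_i$, $\lambda_i\ge0$, $\sum\lambda_i=1$) of nonempty $\tau|_O$-open sets $U_i$ with norm diameter less than $\varepsilon$. *)

From mathcomp Require Import all_boot all_order all_algebra.
From mathcomp Require Import boolp classical_sets reals.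
Set Implicit Arguments. Unset Strict Implicit. Unset Printing Implicit Defensive.
Import Order.TTheory GRing.Theory Num.Theory.
Local Open Scope classical_set_scope.
Local Open Scope ring_scope.

Section C0.
Variable R : realType.

Definition c0 (x : nat -> R) : Prop :=
  forall e : R, 0 < e -> exists N : nat, forall n : nat, (N <= n)%N -> `|x n| < e.

Definition c0norm (x : nat -> R) : R := sup [set `|x n| | n in [set: nat]].

Definition Bc0 : set (nat -> R) := [set x | c0 x /\ c0norm x <= 1].

Definition diam (A : set (nat -> R)) : R :=
  sup [set d | exists x y, A x /\ A y /\ d = c0norm (fun n => x n - y n)].

Definition convex_set (A : set (nat -> R)) : Prop :=
  forall x y (t : R), A x -> A y -> 0 <= t -> t <= 1 ->
    A (fun n => t * x n + (1 - t) * y n).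

Definition c0_dual (f : (nat -> R) -> R) : Prop :=
  (forall x y (a b : R), c0 x -> c0 y ->
     f (fun n => a * x n + b * y n) = a * f x + b * f y) /\
  exists C : R, forall x, c0 x -> `|f x| <= C * c0norm x.

Definition weak_open (U : set (nat -> R)) : Prop :=
  U `<=` Bc0 /\
  forall x, U x -> exists (k : nat) (f : nat -> (nat -> R) -> R) (e : R),
    0 < e /\ (forall i, (i < k)%N -> c0_dual (f i)) /\
    (forall y, Bc0 y -> (forall i, (i < k)%N -> `|f i y - f i x| < e) -> U y).

Definition is_topology_on_Bc0 (tau : set (set (nat -> R))) : Prop :=
  (forall U, tau U -> U `<=` Bc0) /\ tau set0 /\ tau Bc0 /\
  (forall U V, tau U -> tau V -> tau (U `&` V)) /\
  (forall F : set (set (nat -> R)), F `<=` tau -> tau (\bigcup_(U in F) U)).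

Definition locally_convex (tau : set (set (nat -> R))) : Prop :=
  forall U x, tau U -> U x ->
    exists V, tau V /\ convex_set V /\ V x /\ V `<=` U.

Definition rel_open (tau : set (set (nat -> R))) (O U : set (nat -> R)) : Prop :=
  exists W, tau W /\ U = O `&` W.

Definition mink_comb (k : nat) (lam : nat -> R) (Us : nat -> set (nat -> R))
  : set (nat -> R) :=
  [set z | exists u : nat -> nat -> R,
     (forall i, (i < k)%N -> Us i (u i)) /\
     z = (fun n => \sum_(i < k) lam i * u i n)].

Definition strongly_regular_open (tau : set (set (nat -> R))) : Prop :=
  forall O, tau O -> O !=set0 -> convex_set O ->
  forall e : R, 0 < e ->
    exists (k : nat) (lam : nat -> R) (Us : nat -> set (nat -> R)),
      (forall i, (i < k)%N -> 0 <= lam i) /\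
      \sum_(i < k) lam i = 1 /\
      (forall i, (i < k)%N -> rel_open tau O (Us i) /\ Us i !=set0) /\
      diam (mink_comb k lam Us) < e.

End C0.

From mathcomp Require Import all_boot all_order all_algebra.
From mathcomp Require Import boolp classical_sets reals.
From mathcomp Require Import ring lra zify.
Import Order.TTheory GRing.Theory Num.Theory.
Set Implicit Arguments. Unset Strict Implicit. Unset Printing Implicit Defensive.
Local Open Scope classical_set_scope.
Local Open Scope ring_scope.

(* A basic neighbourhood of x refines a weak one by a finite list H of pins
   (m, b), each keeping x_m near 1/2 (b true) or near 0 (b false), and by
   controlling, uniformly within d, every coordinate that is not free for H;
   n is free when it exceeds every pinned position m and its m-th binary digit
   is b.  Since the pins of a point are consistent, free coordinates are
   unbounded, and functionals of c_0^* vanish at infinity on unit vectors.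
   Hence every open set contains two points at distance 2, obtained by setting
   a far free coordinate to 1 and to -1.  For strong regularity, pick K far
   free coordinates t_0, ..., t_(K-1) and let x_i carry 1/2 at t_i and 0 at
   the other t_j, pinned accordingly: x_i is still close to x, and the binary
   digits at the t_j make the free sets of the K new neighbourhoods pairwise
   disjoint.  In their average each coordinate therefore moves by at most
   2/K + 2d. *)

Lemma notin_gt_bigmax (S : seq nat) n : (\max_(t <- S) t < n)%N -> n \notin S.
Proof.
move=> hn; apply/negP => nS.
by have := @leq_bigmax_seq _ S xpredT id n nS isT; rewrite leqNgt hn.
Qed.

Lemma unbounded_uniq_seq (P : nat -> Prop) :
  (forall M, exists2 m, (M <= m)%N & P m) ->
  forall K, exists S : seq nat, [/\ uniq S, size S = K & forall t, t \in S -> P t].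
Proof.
move=> hP; elim=> [|K [S [uS sS PS]]]; first by exists [::].
have [m mS Pm] := hP (\max_(t <- S) t).+1.
exists (m :: S); split=> /=; first by rewrite notin_gt_bigmax.
- by rewrite sS.
- by move=> t; rewrite inE => /predU1P[->|/PS].
Qed.


Definition digit (n m : nat) : bool := odd (n %/ 2 ^ m).

(* The leading digit 1 makes [binary l] exceed every position of [l]. *)
Fixpoint binary (l : seq bool) : nat := if l is b :: l' then b + (binary l').*2 else 1.

Lemma digit_binary l m : (m < size l)%N -> digit (binary l) m = nth false l m.
Proof.
elim: l m => [|b l IH] [|m] //=.
  by move=> _; rewrite /digit expn0 divn1 oddD odd_double addbF; case: b.
by rewrite ltnS => /IH <-; rewrite /digit expnS divnMA divn2 half_bit_double.
Qed.

Lemma size_lt_binary l : (size l < binary l)%N.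
Proof. by elim: l => [|[] l IH] //=; lia. Qed.

Definition free_coord (H : seq (nat * bool)) (n : nat) : bool :=
  all (fun p => (p.1 < n)%N && (digit n p.1 == p.2)) H.

Definition consistent_pins (H : seq (nat * bool)) : Prop :=
  forall m, (m, true) \in H -> (m, false) \notin H.

Lemma pin_not_free H p : p \in H -> ~~ free_coord H p.1.
Proof. by move=> pH; apply/negP => /allP/(_ _ pH)/andP[]; rewrite ltnn. Qed.

Lemma free_coord_unbounded H : consistent_pins H ->
  forall M, exists2 n, (M <= n)%N & free_coord H n.
Proof.
move=> cH M; pose P := (M + (\max_(p <- H) p.1).+1)%N.
pose l := [seq (j, true) \in H | j <- iota 0 P].
have sl : size l = P by rewrite size_map size_iota.
exists (binary l); first by rewrite (leq_trans _ (ltnW (size_lt_binary l))) // sl leq_addr.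
apply/allP => -[m b] mbH /=.
have mP : (m < P)%N.
  by have := @leq_bigmax_seq _ H xpredT (fun p => p.1) _ mbH isT; rewrite /P /=; lia.
apply/andP; split; first by rewrite (leq_trans mP) // -sl ltnW ?size_lt_binary.
rewrite digit_binary ?sl // (nth_map 0%N) ?size_iota // nth_iota // add0n.
by case: b mbH => [-> //|mfH]; rewrite eqbF_neg; apply: contraL mfH; apply: cH.
Qed.

Section C0Ball.
Variable R : realType.
Implicit Types (x y z : nat -> R) (S : seq nat).

Lemma c0_bounded x : c0 x -> exists B : R, forall n, `|x n| <= B.
Proof.
move=> cx; have [N hN] := cx 1 ltr01.
exists (1 + \sum_(j < N) `|x j|) => n.
case: (leqP N n) => [Nn|nN].
  by rewrite -[`|x n|]addr0; apply: lerD; [exact: ltW (hN n Nn) | exact: sumr_ge0].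
rewrite -[`|x n|]add0r; apply: lerD => //.
by rewrite (bigD1 (Ordinal nN)) //= lerDl sumr_ge0.
Qed.

Lemma coord_le_c0norm x n : c0 x -> `|x n| <= c0norm x.
Proof.
move=> /c0_bounded[B hB]; apply: ub_le_sup; last by exists n.
by exists B => _ [m _ <-].
Qed.

Lemma c0norm_le x (b : R) : (forall n, `|x n| <= b) -> c0norm x <= b.
Proof. by move=> hb; apply: ge_sup; [exists `|x 0%N|, 0%N | move=> _ [m _ <-]]. Qed.

Lemma c0norm_ge0 x : c0 x -> 0 <= c0norm x.
Proof. by move=> cx; apply: le_trans (coord_le_c0norm 0 cx). Qed.

Lemma c0_finite_change x y S : c0 x -> (forall n, n \notin S -> y n = x n) -> c0 y.
Proof.
move=> cx yx e e0; have [N hN] := cx e e0.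
exists (maxn N (\max_(t <- S) t).+1) => n; rewrite geq_max => /andP[Nn Sn].
by rewrite yx ?hN ?notin_gt_bigmax.
Qed.

Lemma c0_finsupp x S : (forall n, n \notin S -> x n = 0) -> c0 x.
Proof.
by apply: (@c0_finite_change (fun=> 0)) => e e0; exists 0%N => n _; rewrite normr0.
Qed.

Lemma c0_lin x y (a b : R) : c0 x -> c0 y -> c0 (fun n => a * x n + b * y n).
Proof.
move=> cx cy e e0; set C := `|a| + `|b| + 1.
have C0 : 0 < C by rewrite ltr_wpDl ?addr_ge0.
have [N1 h1] := cx _ (divr_gt0 e0 C0); have [N2 h2] := cy _ (divr_gt0 e0 C0).
exists (maxn N1 N2) => n; rewrite geq_max => /andP[n1 n2].
apply: le_lt_trans (ler_normD _ _) _; rewrite !normrM.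
have -> : e = C * (e / C) by rewrite mulrC divfK ?gt_eqF.
move: (e / C) (divr_gt0 e0 C0) (h1 n n1) (h2 n n2) => c c_gt0 hx hy.
have := normr_ge0 a; have := normr_ge0 b; rewrite /C; nra.
Qed.

Lemma c0_sub x y : c0 x -> c0 y -> c0 (fun n => x n - y n).
Proof.
move=> cx cy; have := c0_lin 1 (-1) cx cy.
by congr c0; apply: funext => n; rewrite mul1r mulN1r.
Qed.

Definition unitv (m : nat) : nat -> R := fun n => if n == m then 1 else 0.

Lemma c0_unitv m : c0 (unitv m).
Proof. by apply: (c0_finsupp (S := [:: m])) => n; rewrite inE /unitv => /negbTE ->. Qed.

Lemma Bc0_intro x : c0 x -> (forall n, `|x n| <= 1) -> Bc0 x.
Proof. by move=> cx x1; split=> //; apply: c0norm_le. Qed.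

Lemma Bc0_coord_le x n : Bc0 x -> `|x n| <= 1.
Proof. by move=> [cx x1]; apply: le_trans (coord_le_c0norm n cx) x1. Qed.

Lemma Bc0_coord_dist_le x y n : Bc0 x -> Bc0 y -> `|x n - y n| <= 2.
Proof.
move=> /(Bc0_coord_le n) bx /(Bc0_coord_le n) by_.
by apply: le_trans (ler_normB _ _) _; lra.
Qed.

Lemma Bc0_dist_le x y : Bc0 x -> Bc0 y -> c0norm (fun n => x n - y n) <= 2.
Proof. by move=> bx by_; apply: c0norm_le => n; apply: Bc0_coord_dist_le. Qed.

Definition duals k (f : nat -> (nat -> R) -> R) := forall i, (i < k)%N -> c0_dual (f i).

Lemma dual_lin f x y (a b : R) : c0_dual f -> c0 x -> c0 y ->
  f (fun n => a * x n + b * y n) = a * f x + b * f y.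
Proof. by move=> [lin _]; apply: lin. Qed.

Lemma dual0 (f : (nat -> R) -> R) : c0_dual f -> f (fun=> 0) = 0.
Proof.
move=> hf; have c00 : c0 (fun=> 0 : R) by apply: (c0_finsupp (S := [::])).
transitivity (f (fun n => 0 * 0 + 0 * 0)).
  by congr f; apply: funext => n; rewrite mul0r addr0.
by rewrite (dual_lin 0 0 hf c00 c00) !mul0r addr0.
Qed.

Lemma dual_sub f x y : c0_dual f -> c0 x -> c0 y -> f (fun n => x n - y n) = f x - f y.
Proof.
move=> hf cx cy; rewrite -mulN1r -[f x]mul1r -(dual_lin _ _ hf cx cy).
by congr f; apply: funext => n; rewrite mul1r mulN1r.
Qed.

Lemma dual_finsupp f d S : c0_dual f -> uniq S -> (forall n, n \notin S -> d n = 0) ->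
  f d = \sum_(s <- S) d s * f (unitv s).
Proof.
move=> hf; elim: S d => [|s S IH] d /=.
  by move=> _ d0; rewrite big_nil -(dual0 hf); congr f; apply: funext => n; rewrite d0.
move=> /andP[sS uS] dS; pose d' n := if n == s then 0 else d n.
have d'S n : n \notin S -> d' n = 0.
  by rewrite /d'; case: eqVneq => // ns nS; apply: dS; rewrite inE negb_or ns.
have {1}-> : d = (fun n => 1 * d' n + d s * unitv s n).
  apply: funext => n; rewrite /d' /unitv.
  by case: eqVneq => [->|_]; rewrite ?mulr1 ?mulr0 ?mul1r ?add0r ?addr0.
rewrite (dual_lin _ _ hf (c0_finsupp d'S) (c0_unitv s)) mul1r big_cons addrC (IH _ uS d'S).
congr (_ + _); apply: eq_big_seq => t tS; rewrite /d' ifN_eq //.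
by apply: contraNneq sS => <-.
Qed.

Lemma dual_unitv_l1_bounded (f : (nat -> R) -> R) : c0_dual f ->
  exists C : R, forall S, uniq S -> \sum_(t <- S) `|f (unitv t)| <= C.
Proof.
move=> hf; have [_ [C hC]] := hf; exists `|C| => S uS.
pose w n := if n \in S then Num.sg (f (unitv n)) else 0.
have wS n : n \notin S -> w n = 0 by rewrite /w => /negbTE ->.
have cw := c0_finsupp wS.
have -> : \sum_(t <- S) `|f (unitv t)| = f w.
  by rewrite (dual_finsupp hf uS wS); apply: eq_big_seq => t tS; rewrite /w tS -normrEsg.
have w1 : c0norm w <= 1.
  apply: c0norm_le => n; rewrite /w; case: ifP => _; last by rewrite normr0.
  by rewrite normr_sg; case: (_ != 0).
apply: le_trans (ler_norm _) (le_trans (hC w cw) _).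
apply: le_trans (ler_wpM2r (c0norm_ge0 cw) (ler_norm C)) _.
by rewrite -[leRHS]mulr1 ler_wpM2l.
Qed.

Lemma dual_unitv_vanish (f : (nat -> R) -> R) (eps : R) : c0_dual f -> 0 < eps ->
  exists M, forall m, (M <= m)%N -> `|f (unitv m)| < eps.
Proof.
move=> hf eps0; apply: contrapT => no_vanish.
have unb M : exists2 m, (M <= m)%N & eps <= `|f (unitv m)|.
  apply: contrapT => no_big; apply: no_vanish; exists M => m Mm.
  by rewrite ltNge; apply/negP => big; apply: no_big; exists m.
have [C hC] := dual_unitv_l1_bounded hf.
pose K := Num.Def.archi_bound (`|C| / eps).
have [S [uS sS bigS]] := unbounded_uniq_seq unb K.
have : K%:R * eps <= `|C|.
  apply: le_trans (ler_norm C); apply: le_trans (hC S uS).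
  apply: le_trans (_ : \sum_(t <- S) eps <= _).
    by rewrite big_const_seq count_predT iter_addr_0 sS mulr_natl.
  by rewrite big_seq [leRHS]big_seq; apply: ler_sum => t /bigS.
by rewrite -ler_pdivlMr // leNgt archi_boundP // divr_ge0 // ltW.
Qed.

Lemma duals_unitv_vanish k f (eps : R) : duals k f -> 0 < eps ->
  exists M, forall i m, (i < k)%N -> (M <= m)%N -> `|f i (unitv m)| < eps.
Proof.
move=> + eps0; elim: k => [|k IH] hf; first by exists 0%N.
have [M1 h1] := IH (fun i ik => hf i (ltnW ik)).
have [M2 h2] := dual_unitv_vanish (hf k (ltnSn k)) eps0.
exists (maxn M1 M2) => i m; rewrite ltnS leq_eqVlt geq_max => /predU1P[->|ik] /andP[m1 m2].
  exact: h2.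
exact: h1.
Qed.

(* A pin [(m, b)] keeps coordinate [m] within 1/4 of [pin_val b]; the two
   targets are 1/2 apart, so no coordinate can carry both pins. *)
Definition pin_val (b : bool) : R := if b then 2^-1 else 0.

Definition pinned x (H : seq (nat * bool)) (d : R) : Prop :=
  forall p, p \in H -> `|x p.1 - pin_val p.2| + d < 4^-1.

Lemma pinned_consistent x H d : 0 <= d -> pinned x H d -> consistent_pins H.
Proof.
move=> d0 hp m /hp mt; apply/negP => /hp /=; rewrite subr0 => mf.
have : `|x m - 2^-1| < 4^-1 by apply: le_lt_trans mt; rewrite lerDl.
have : `|x m| < 4^-1 by apply: le_lt_trans mf; rewrite lerDl.
rewrite -[2^-1]div1r -[4^-1]div1r !ltr_norml; lra.
Qed.

(* The tolerance is a single [eta < d] for all non-free coordinates: a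
   pointwise bound [< d] would not give an open set. *)
Definition nbhd x H (d : R) k (f : nat -> (nat -> R) -> R) (e : R) : set (nat -> R) :=
  [set y | [/\ Bc0 y, forall i, (i < k)%N -> `|f i y - f i x| < e &
     exists2 eta, 0 <= eta < d & forall n, ~~ free_coord H n -> `|y n - x n| <= eta]].

Definition tau : set (set (nat -> R)) :=
  [set U | U `<=` @Bc0 R /\ forall x, U x -> exists H d k f e,
     [/\ 0 < d, 0 < e, duals k f, pinned x H d & nbhd x H d k f e `<=` U]].

Lemma nbhd_self x H d k f e : Bc0 x -> 0 < d -> 0 < e -> nbhd x H d k f e x.
Proof.
move=> bx d0 e0; split=> [//||]; first by move=> i _; rewrite subrr normr0.
by exists 0; rewrite ?lexx ?d0 // => n _; rewrite subrr normr0.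
Qed.

Lemma uniform_slack k (g : nat -> R) (e : R) : 0 < e ->
  (forall i, (i < k)%N -> g i < e) ->
  exists2 e', 0 < e' & forall i, (i < k)%N -> g i + e' <= e.
Proof.
move=> e0; elim: k => [|k IH] hg; first by exists e.
have [e1 e10 h1] := IH (fun i ik => hg i (ltnW ik)).
exists (Num.min e1 (e - g k)) => [|i]; first by rewrite lt_min e10 subr_gt0 hg.
rewrite ltnS leq_eqVlt => /predU1P[->|ik]; first by rewrite -lerBrDl ge_min lexx orbT.
by apply: le_trans (h1 i ik); rewrite lerD2l ge_min lexx.
Qed.

Lemma nbhd_open x H d k f e : 0 < d -> 0 < e -> duals k f -> pinned x H d ->
  tau (nbhd x H d k f e).
Proof.
move=> d0 e0 hf hp; split=> [y [] //|y [By Wy [eta /andP[eta0 etad] Py]]].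
have [e' e'0 he'] := uniform_slack e0 Wy.
exists H, (d - eta), k, f, e'; split=> //; first by rewrite subr_gt0.
  move=> p pH; have := hp p pH; have := Py _ (pin_not_free pH).
  have := ler_distD (x p.1) (y p.1) (pin_val p.2); lra.
move=> z [Bz Wz [eta' /andP[eta'0 eta'd] Pz]]; split=> // [i ik|].
  apply: le_lt_trans (ler_distD (f i y) _ _) _.
  by have := he' i ik; have := Wz i ik; rewrite [`|f i y - _|]distrC; lra.
exists (eta + eta'); first by apply/andP; split; [exact: addr_ge0 | lra].
move=> n nfree; apply: le_trans (ler_distD (y n) _ _) _.
by have := Py n nfree; have := Pz n nfree; lra.
Qed.

Lemma norm_convex_le (a b c t : R) : 0 <= t <= 1 -> `|a| <= c -> `|b| <= c ->
  `|t * a + (1 - t) * b| <= c.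
Proof.
move=> /andP[t0 t1] ha hb; apply: le_trans (ler_normD _ _) _.
by rewrite !normrM (ger0_norm t0) (@ger0_norm _ (1 - t)) ?subr_ge0 //; nra.
Qed.

Lemma norm_convex_lt (a b c t : R) : 0 <= t <= 1 -> `|a| < c -> `|b| < c ->
  `|t * a + (1 - t) * b| < c.
Proof.
move=> t01 ha hb; have ma : `|a| <= Num.max `|a| `|b| by rewrite le_max lexx.
have mb : `|b| <= Num.max `|a| `|b| by rewrite le_max lexx orbT.
by apply: le_lt_trans (norm_convex_le t01 ma mb) _; rewrite gt_max ha hb.
Qed.

Lemma nbhd_convex x H d k f e : duals k f -> convex_set (nbhd x H d k f e).
Proof.
move=> hf y z t [By Wy [e1 /andP[e10 e1d] P1]] [Bz Wz [e2 /andP[e20 e2d] P2]] t0 t1.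
have t01 : 0 <= t <= 1 by rewrite t0 t1.
have convex_sub (u v : R) w : t * u + (1 - t) * v - w = t * (u - w) + (1 - t) * (v - w).
  by ring.
split.
- apply: Bc0_intro; first exact: c0_lin By.1 Bz.1.
  by move=> n; apply: norm_convex_le (Bc0_coord_le n By) (Bc0_coord_le n Bz).
- move=> i ik; rewrite (dual_lin _ _ (hf i ik) By.1 Bz.1) convex_sub.
  exact: norm_convex_lt (Wy i ik) (Wz i ik).
- exists (Num.max e1 e2); first by rewrite le_max e10 gt_max e1d e2d.
  move=> n nfree; rewrite convex_sub; apply: norm_convex_le => //.
    by apply: le_trans (P1 n nfree) _; rewrite le_max lexx.
  by apply: le_trans (P2 n nfree) _; rewrite le_max lexx orbT.
Qed.

Lemma nbhd_shrink x H d k f e H' d' k' f' e' :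
  (forall n, free_coord H' n -> free_coord H n) -> d' <= d -> e' <= e ->
  (forall i, (i < k)%N -> exists2 j, (j < k')%N & f' j = f i) ->
  nbhd x H' d' k' f' e' `<=` nbhd x H d k f e.
Proof.
move=> hH hd he hf y [By Wy [eta /andP[eta0 etad] Py]]; split=> // [i ik|].
  by have [j jk <-] := hf i ik; apply: lt_le_trans (Wy j jk) he.
exists eta; first by rewrite eta0 (lt_le_trans etad hd).
by move=> n nfree; apply: Py; apply: contra nfree; apply: hH.
Qed.

Lemma tau_setI U V : tau U -> tau V -> tau (U `&` V).
Proof.
move=> [UB hU] [VB hV]; split=> [y [/UB //]|x [Ux Vx]].
have [H [d [k [f [e [d0 e0 hf hp sub]]]]]] := hU x Ux.
have [H' [d' [k' [f' [e' [d0' e0' hf' hp' sub']]]]]] := hV x Vx.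
pose g i := if (i < k)%N then f i else f' (i - k)%N.
have freeHH' n : free_coord (H ++ H') n -> free_coord H n && free_coord H' n.
  by rewrite /free_coord all_cat.
exists (H ++ H'), (Num.min d d'), (k + k')%N, g, (Num.min e e'); split.
- by rewrite lt_min d0 d0'.
- by rewrite lt_min e0 e0'.
- move=> i ik; rewrite /g; case: ifP => [/hf //|iNk]; apply: hf'; lia.
- move=> p; rewrite mem_cat => /orP[pH|pH'].
    by apply: le_lt_trans (hp p pH); rewrite lerD2l ge_min lexx.
  by apply: le_lt_trans (hp' p pH'); rewrite lerD2l ge_min lexx orbT.
- move=> y y_near; split; [apply: sub | apply: sub']; apply: nbhd_shrink y_near.
  + by move=> n /freeHH'/andP[].
  + by rewrite ge_min lexx.
  + by rewrite ge_min lexx.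
  + by move=> i ik; exists i; rewrite /g ?ik //; lia.
  + by move=> n /freeHH'/andP[].
  + by rewrite ge_min lexx orbT.
  + by rewrite ge_min lexx orbT.
  + by move=> i ik; exists (k + i)%N; rewrite /g ?ltnNge ?leq_addr ?addKn //; lia.
Qed.

Lemma tau_bigcup (F : set (set (nat -> R))) : F `<=` tau -> tau (\bigcup_(U in F) U).
Proof.
move=> Ftau; split=> [y [U /Ftau[UB _] /UB //]|x [U FU Ux]].
have [H [d [k [f [e [d0 e0 hf hp sub]]]]]] := (Ftau U FU).2 x Ux.
by exists H, d, k, f, e; split=> // y /sub; exists U.
Qed.

Lemma tau_topology : is_topology_on_Bc0 tau.
Proof.
split; first by move=> U [].
split; first by split=> // x.
split.
  split=> // x Bx; exists [::], 1, 0%N, (fun _ _ => 0), 1.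
  by split=> // y [].
by split; [exact: tau_setI | exact: tau_bigcup].
Qed.

Lemma tau_locally_convex : locally_convex tau.
Proof.
move=> U x [UB hU] Ux; have [H [d [k [f [e [d0 e0 hf hp sub]]]]]] := hU x Ux.
exists (nbhd x H d k f e); split; first exact: nbhd_open.
by split; [exact: nbhd_convex | split; [exact: nbhd_self (UB x Ux) d0 e0 |]].
Qed.

Lemma weak_open_tau U : weak_open U -> tau U.
Proof.
move=> [UB hU]; split=> // x Ux; have [k [f [e [e0 [hf sub]]]]] := hU x Ux.
by exists [::], 1, k, f, e; split=> // y [By Wy _]; apply: sub.
Qed.

Lemma diam_le (A : set (nat -> R)) (b : R) : A !=set0 ->
  (forall x y, A x -> A y -> c0norm (fun n => x n - y n) <= b) -> diam A <= b.
Proof.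
move=> [x Ax] hb; apply: ge_sup; first by exists (c0norm (fun n => x n - x n)), x, x.
by move=> _ [y [z [Ay [Az ->]]]]; apply: hb.
Qed.

Lemma le_diam (A : set (nat -> R)) (b : R) x y :
  (forall x y, A x -> A y -> c0norm (fun n => x n - y n) <= b) -> A x -> A y ->
  c0norm (fun n => x n - y n) <= diam A.
Proof.
move=> hb Ax Ay; apply: ub_le_sup; last by exists x, y.
by exists b => _ [u [v [Au [Av ->]]]]; apply: hb.
Qed.

Lemma diam_eq2 (A : set (nat -> R)) x y n : A `<=` @Bc0 R -> A x -> A y ->
  2 <= `|x n - y n| -> diam A = 2.
Proof.
move=> AB Ax Ay xy2; have Adist u v : A u -> A v -> c0norm (fun n => u n - v n) <= 2.
  by move=> /AB Bu /AB Bv; apply: Bc0_dist_le.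
apply/le_anti; rewrite diam_le //=; last by exists x.
apply: le_trans xy2 (le_trans _ (le_diam Adist Ax Ay)).
exact: coord_le_c0norm (c0_sub (AB x Ax).1 (AB y Ay).1).
Qed.

Lemma nbhd_finite_change x y H d k f e S : Bc0 x -> Bc0 y -> 0 < d -> duals k f ->
  uniq S -> (forall n, n \notin S -> y n = x n) -> (forall t, t \in S -> free_coord H t) ->
  (forall i, (i < k)%N -> 2 * \sum_(t <- S) `|f i (unitv t)| < e) ->
  nbhd x H d k f e y.
Proof.
move=> Bx By d0 hf uS yx Sfree small; split=> // [i ik|].
  rewrite -(dual_sub (hf i ik) By.1 Bx.1).
  rewrite (dual_finsupp (hf i ik) uS); last by move=> n /yx ->; rewrite subrr.
  apply: le_lt_trans (ler_norm_sum _ _ _) (le_lt_trans _ (small i ik)).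
  rewrite mulr_sumr big_seq [leRHS]big_seq; apply: ler_sum => t _.
  by rewrite normrM ler_wpM2r // Bc0_coord_dist_le.
exists 0; first by rewrite lexx d0.
by move=> n nfree; rewrite yx ?subrr ?normr0 //; apply: contra nfree; apply: Sfree.
Qed.

Definition set_coord x n (a : R) : nat -> R := fun j => if j == n then a else x j.

Lemma Bc0_set_coord x n (a : R) : Bc0 x -> `|a| <= 1 -> Bc0 (set_coord x n a).
Proof.
move=> Bx a1; apply: Bc0_intro => [|j]; rewrite /set_coord.
  by apply: (c0_finite_change (S := [:: n]) Bx.1) => j; rewrite inE => /negbTE ->.
by case: eqP => // _; apply: Bc0_coord_le.
Qed.

Lemma tau_diam U : tau U -> U !=set0 -> diam U = 2.
Proof.
move=> [UB hU] [x Ux]; have [H [d [k [f [e [d0 e0 hf hp sub]]]]]] := hU x Ux.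
have Bx := UB x Ux.
have [M hM] := duals_unitv_vanish hf (divr_gt0 e0 (ltr0Sn _ 1)).
have [n Mn nfree] := free_coord_unbounded (pinned_consistent (ltW d0) hp) M.
have U_set a : `|a| <= 1 -> U (set_coord x n a).
  move=> a1; apply/sub/(nbhd_finite_change (S := [:: n])) => //.
  - exact: Bc0_set_coord.
  - by move=> j; rewrite inE /set_coord => /negbTE ->.
  - by move=> t; rewrite inE => /eqP ->.
  - by move=> i ik; rewrite big_seq1; have := hM i n ik Mn; lra.
apply: (diam_eq2 (n := n) UB (U_set 1 _) (U_set (-1) _)); rewrite ?normrN ?normr1 //.
by rewrite /set_coord eqxx opprK ger0_norm; lra.
Qed.

Lemma exists_free_small_coords x H d k f (eps : R) K : (0 < K)%N -> 0 < d -> 0 < eps ->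
  duals k f -> pinned x H d ->
  exists T : seq nat, [/\ uniq T, size T = K, forall t, t \in T -> free_coord H t &
    forall l, (l < k)%N -> 2 * \sum_(t <- T) `|f l (unitv t)| < eps].
Proof.
move=> K0 d0 eps0 hf hp.
have delta0 : 0 < eps / (4 * K%:R) by rewrite divr_gt0 // mulr_gt0 // ltr0n.
have [M hM] := duals_unitv_vanish hf delta0.
have unb M' : exists2 m, (M' <= m)%N & (M <= m)%N && free_coord H m.
  have [m + mfree] := free_coord_unbounded (pinned_consistent (ltW d0) hp) (maxn M M').
  by rewrite geq_max => /andP[Mm M'm]; exists m; rewrite ?Mm.
have [T [uT sT hT]] := unbounded_uniq_seq unb K.
exists T; split=> // [t /hT/andP[] //|l lk].
have : \sum_(t <- T) `|f l (unitv t)| <= \sum_(t <- T) eps / (4 * K%:R).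
  by rewrite big_seq [leRHS]big_seq; apply: ler_sum => t /hT/andP[Mt _]; apply/ltW/hM.
have -> : \sum_(t <- T) eps / (4 * K%:R) = eps / 4.
  rewrite big_const_seq count_predT iter_addr_0 sT -(mulr_natl (eps / _)).
  by field; rewrite pnatr_eq0 -lt0n.
lra.
Qed.

Lemma nbhd_coord_close x H d k f e u v n :
  nbhd x H d k f e u -> nbhd x H d k f e v -> ~~ free_coord H n -> `|u n - v n| <= 2 * d.
Proof.
move=> [_ _ [eu /andP[_ eud] Pu]] [_ _ [ev /andP[_ evd] Pv]] nfree.
apply: le_trans (ler_distD (x n) _ _) _; rewrite [`|x n - _|]distrC.
by have := Pu n nfree; have := Pv n nfree; lra.
Qed.

Lemma exists_all_but_one (K : nat) (P : pred 'I_K) : (0 < K)%N ->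
  (forall i j, P i -> P j -> i = j) -> exists i0, forall i, i != i0 -> ~~ P i.
Proof.
move=> K0 uP; case: (pickP P) => [i0 Pi0|noP]; last by exists (Ordinal K0) => i _; rewrite noP.
by exists i0 => i; apply: contra => Pi; rewrite (uP i i0 Pi Pi0).
Qed.

Lemma norm_avg_le (K : nat) (a : 'I_K -> R) (i0 : 'I_K) (b c : R) :
  0 <= c -> `|a i0| <= b -> (forall i, i != i0 -> `|a i| <= c) ->
  `|\sum_i K%:R^-1 * a i| <= K%:R^-1 * b + c.
Proof.
move=> c_ge0 hb hc.
have K0 : K%:R != 0 :> R by rewrite pnatr_eq0 -lt0n (leq_ltn_trans (leq0n i0) (ltn_ord i0)).
rewrite -mulr_sumr normrM ger0_norm ?invr_ge0 ?ler0n // -[c in leRHS](mulKf K0) -mulrDr.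
apply: ler_wpM2l; first by rewrite invr_ge0 ler0n.
apply: le_trans (ler_norm_sum _ _ _) _.
apply: le_trans (_ : _ <= \sum_i ((if i == i0 then b else 0) + c)) _.
  by apply: ler_sum => i _; case: eqVneq => [->|/hc ac] /=; lra.
by rewrite big_split /= -big_mkcond big_pred1_eq sumr_const card_ord mulr_natl.
Qed.

Lemma mink_avg_dist_le (K : nat) (Us : nat -> set (nat -> R)) (c : R) z z' :
  0 <= c -> (forall i, (i < K)%N -> Us i `<=` @Bc0 R) ->
  (forall n, exists i0 : 'I_K, forall i : 'I_K, i != i0 ->
     forall u v, Us i u -> Us i v -> `|u n - v n| <= c) ->
  mink_comb K (fun=> K%:R^-1) Us z -> mink_comb K (fun=> K%:R^-1) Us z' ->
  c0norm (fun n => z n - z' n) <= K%:R^-1 * 2 + c.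
Proof.
move=> c_ge0 UsB thin [u [Uu ->]] [u' [Uu' ->]]; apply: c0norm_le => n /=.
have [i0 hi0] := thin n; rewrite -sumrB; under eq_bigr do rewrite -mulrBr.
apply: norm_avg_le => // [|i ne]; last exact: hi0 ne _ _ (Uu i (ltn_ord i)) (Uu' i (ltn_ord i)).
have UB := UsB _ (ltn_ord i0).
exact: Bc0_coord_dist_le (UB _ (Uu _ (ltn_ord i0))) (UB _ (Uu' _ (ltn_ord i0))).
Qed.

Section Splitting.
Variables (x : nat -> R) (H : seq (nat * bool)) (T : seq nat).
Hypotheses (uT : uniq T) (T_free : forall t, t \in T -> free_coord H t).

Definition split_point (i : nat) : nat -> R :=
  fun n => if n \in T then pin_val (n == nth 0%N T i) else x n.

(* A coordinate free for [split_pins i] has binary digit 1 at position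
   [nth 0 T i] and 0 at the other positions of [T]. *)
Definition split_pins (i : nat) : seq (nat * bool) :=
  H ++ [seq (t, t == nth 0%N T i) | t <- T].

Definition split_nbhd (dl : R) (i : nat) : set (nat -> R) :=
  nbhd (split_point i) (split_pins i) dl 0 (fun _ _ => 0) 1.

Lemma split_pins_disjoint i j n : (i < size T)%N -> (j < size T)%N ->
  free_coord (split_pins i) n -> free_coord (split_pins j) n -> i = j.
Proof.
move=> iT jT /allP fi /allP fj; set ti := nth 0%N T i.
have pin_ti l : (ti, ti == nth 0%N T l) \in split_pins l.
  by rewrite mem_cat (map_f (fun t => (t, t == nth 0%N T l))) ?orbT ?mem_nth.
move: (fi _ (pin_ti i)) (fj _ (pin_ti j)) => /andP[_ /eqP /= di] /andP[_ /eqP /= dj].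
by apply/eqP; rewrite -(nth_uniq 0%N iT jT uT) -/ti -dj di eqxx.
Qed.

Lemma split_point_pinned i d dl : pinned x H d -> dl <= d -> dl < 4^-1 ->
  pinned (split_point i) (split_pins i) dl.
Proof.
move=> hp dld dl4 p; rewrite mem_cat => /orP[pH|/mapP[t tT ->]] /=.
  have pT : p.1 \notin T by exact: contra (@T_free _) (pin_not_free pH).
  by rewrite /split_point (negbTE pT); apply: le_lt_trans (hp p pH); rewrite lerD2l.
by rewrite /split_point tT subrr normr0 add0r.
Qed.

Lemma Bc0_split_point i : Bc0 x -> Bc0 (split_point i).
Proof.
move=> Bx; apply: Bc0_intro => [|n]; rewrite /split_point.
  by apply: (c0_finite_change (S := T) Bx.1) => n nT /=; rewrite (negbTE nT).
case: ifP => _; last exact: Bc0_coord_le.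
by case: (_ == _); rewrite /pin_val ?normr0 // ger0_norm ?invr_ge0 // invf_le1 // ler1n.
Qed.

Lemma split_point_near i d k f e : Bc0 x -> 0 < d -> duals k f ->
  (forall l, (l < k)%N -> 2 * \sum_(t <- T) `|f l (unitv t)| < e) ->
  nbhd x H d k f e (split_point i).
Proof.
move=> Bx d0 hf small; apply: (nbhd_finite_change (S := T) Bx (Bc0_split_point i Bx)) => // n nT.
by rewrite /split_point (negbTE nT).
Qed.

Lemma split_nbhd_mink_dist_le (O : set (nat -> R)) dl z z' : (0 < size T)%N ->
  O `<=` @Bc0 R -> 0 <= dl ->
  mink_comb (size T) (fun=> (size T)%:R^-1) (fun i => O `&` split_nbhd dl i) z ->
  mink_comb (size T) (fun=> (size T)%:R^-1) (fun i => O `&` split_nbhd dl i) z' ->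
  c0norm (fun n => z n - z' n) <= (size T)%:R^-1 * 2 + 2 * dl.
Proof.
move=> T0 OB dl0 hz hz'; apply: (mink_avg_dist_le _ _ _ hz hz') => [|i _ u [/OB]//|n].
  by rewrite mulr_ge0.
have disj (i j : 'I_(size T)) :
    free_coord (split_pins i) n -> free_coord (split_pins j) n -> i = j.
  by move=> fi fj; apply/val_inj/(split_pins_disjoint (ltn_ord i) (ltn_ord j) fi fj).
have [i0 hi0] := exists_all_but_one T0 disj.
by exists i0 => i ne u v [_ Wu] [_ Wv]; apply: nbhd_coord_close Wu Wv (hi0 i ne).
Qed.

End Splitting.

Lemma tau_strongly_regular : strongly_regular_open tau.
Proof.
move=> O [OB hO] [x Ox] _ e e0; have Bx := OB x Ox.
have [H [d [k [f [eps [d0 eps0 hf hp sub]]]]]] := hO x Ox.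
have [K K0 Ke] : exists2 K, (0 < K)%N & 8 < K%:R * e.
  exists (Num.Def.archi_bound (8 / e)).+1 => //.
  rewrite -ltr_pdivrMr //; apply: lt_le_trans (archi_boundP _) _; last by rewrite ler_nat.
  by rewrite divr_ge0 // ltW.
have [dl [dl0 dld dle dl4]] : exists dl, [/\ 0 < dl, dl <= d, dl <= e / 8 & dl < 4^-1].
  exists (Num.min d (Num.min (e / 8) 8^-1)); split.
  - by rewrite !lt_min d0 divr_gt0 ?invr_gt0 /=; lra.
  - by rewrite ge_min lexx.
  - by rewrite !ge_min lexx orbT.
  - apply: le_lt_trans (_ : _ <= 8^-1) _; first by rewrite !ge_min lexx !orbT.
    by rewrite -[4^-1]div1r -[8^-1]div1r; lra.
have [T [uT sT Tfree Tsmall]] := exists_free_small_coords K0 d0 eps0 hf hp; subst K.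
have KR : (size T)%:R != 0 :> R by rewrite pnatr_eq0 -lt0n.
have xiO i : O (split_point x T i) by apply/sub/split_point_near.
have xiW i : split_nbhd x H T dl i (split_point x T i).
  exact: nbhd_self (Bc0_split_point _ _ Bx) dl0 ltr01.
exists (size T), (fun=> (size T)%:R^-1), (fun i => O `&` split_nbhd x H T dl i).
split; [|split; [|split]].
- by move=> i _; rewrite invr_ge0 ler0n.
- by rewrite sumr_const card_ord -(mulr_natl (size T)%:R^-1) mulfV.
- move=> i iK; split; last by exists (split_point x T i).
  exists (split_nbhd x H T dl i); split=> //.
  by apply: nbhd_open => //; exact: split_point_pinned hp dld dl4.
apply: le_lt_trans (diam_le (b := (size T)%:R^-1 * 2 + 2 * dl) _ _) _.
- by exists (fun n => \sum_(i < size T) (size T)%:R^-1 * split_point x T i n), (split_point x T).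
- by move=> z z'; apply: split_nbhd_mink_dist_le => //; apply: ltW.
- have : (size T)%:R^-1 * (size T)%:R = 1 :> R by rewrite mulVf.
  have : 0 < (size T)%:R^-1 :> R by rewrite invr_gt0 ltr0n.
  nra.
Qed.

End C0Ball.

Theorem theorem3p2 (R : realType) :
  exists tau : set (set (nat -> R)),
    is_topology_on_Bc0 tau /\
    locally_convex tau /\
    (forall U, weak_open U -> tau U) /\
    strongly_regular_open tau /\
    (forall U, tau U -> U !=set0 -> diam U = 2).
Proof.
exists (@tau R); split; first exact: tau_topology.
split; first exact: tau_locally_convex.
split; first exact: weak_open_tau.
split; first exact: tau_strongly_regular.
exact: tau_diam.
Qed.
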